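(* There is an absolute constant $c>0$ such that for every $n$ that is a power of $4$ there exists a $2$-wise independent family $\mathcal{H}$ of functions $h:[n]\to\{-1,1\}$ with \[\mathbb{E}_{h\in\mathcal{H}}\left[\sup_{1\le t\le n}\left|h_1+h_2+\cdots+h_t\right|\right]\ \ge\ c\,\sqrt{n}\,\lg n .\]
   Context: $[n]=\{1,\dots,n\}$, $\lg$ is the base-2 logarithm, and $h_i:=h(i)$. A $k$-wise independent family from $[n]$ to $\{-1,1\}$ is a probability distribution $\mathcal{H}$ over functions $h:[n]\to\{-1,1\}$ such that for any $k$ distinct indices $i_1,\dots,i_k$, the values $h_{i_1},\dots,h_{i_k}$ are independent uniformly random signs (Rademachers). *)

From Stdlib Require Import Reals Lra List.
Open Scope R_scope.

(* A (finitely supported) probability distribution over functions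
   h : nat -> bool, represented as a list of (weight, function) pairs.
   Only the values h 1, ..., h n matter; the boolean b encodes the sign
   (true |-> +1, false |-> -1). *)
Definition sign_family := list (R * (nat -> bool)).

Definition wsum (F : sign_family) (f : (nat -> bool) -> R) : R :=
  fold_right (fun p acc => fst p * f (snd p) + acc) 0 F.

Definition is_distribution (F : sign_family) : Prop :=
  Forall (fun p => 0 <= fst p) F /\ wsum F (fun _ => 1) = 1.

Definition sgn (b : bool) : R := if b then 1 else -1.

Definition two_wise_indep (n : nat) (F : sign_family) : Prop :=
  forall i j : nat, (1 <= i <= n)%nat -> (1 <= j <= n)%nat -> i <> j ->
  forall a b : bool,
    wsum F (fun h => if andb (Bool.eqb (h i) a) (Bool.eqb (h j) b) then 1 else 0)
    = / 4.

Fixpoint psum (h : nat -> bool) (t : nat) : R :=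
  match t with
  | O => 0
  | S t' => psum h t' + sgn (h t)
  end.

Fixpoint maxps (h : nat -> bool) (n : nat) : R :=
  match n with
  | O => 0
  | S n' => Rmax (maxps h n') (Rabs (psum h n))
  end.

Definition lg (x : R) : R := ln x / ln 2.

From Stdlib Require Import Reals Lra Lia List Arith.
Import ListNotations.
Open Scope R_scope.

(* Write n = m^2 with m = 2^k and cut [1, n] into m blocks of m consecutive
   positions. The family is a uniform mixture of product measures: given the
   parameter p the signs are independent with E[h_y] = bias p y, so it is
   pairwise independent as soon as the biases average to 0 and are pairwise
   uncorrelated over p. The bias is half the sum of a block-constant drift
   c_p(b), a normalised Haar-type vector with E[c(b) c(b')] = [b = b'] / m, and a
   random Walsh-character term whose correlation is exactly -1/m between two
   positions of one block and 0 across blocks, cancelling the correlation that the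
   drift creates inside a block. The Haar vector is built so that its prefix sum
   up to a random block B is of order m k on average, so the partial sum of h up
   to position B m, hence its maximum, has expectation of order m k, which is
   the order of sqrt n lg n. *)

Fixpoint sumR (n : nat) (f : nat -> R) : R :=
  match n with O => 0 | S n' => sumR n' f + f n' end.

Lemma sumR_ext n f g : (forall i, (i < n)%nat -> f i = g i) -> sumR n f = sumR n g.
Proof.
  induction n as [|n IH]; intros H; cbn [sumR]; [reflexivity|].
  rewrite IH by (intros; apply H; lia). rewrite H by lia. reflexivity.
Qed.

Lemma sumR_plus n f g : sumR n (fun i => f i + g i) = sumR n f + sumR n g.
Proof. induction n; cbn [sumR]; [lra|]. rewrite IHn; lra. Qed.

Lemma sumR_scal n c f : sumR n (fun i => c * f i) = c * sumR n f.
Proof. induction n; cbn [sumR]; [lra|]. rewrite IHn; lra. Qed.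

Lemma sumR_const n c : sumR n (fun _ => c) = INR n * c.
Proof. induction n; cbn [sumR]; [simpl; lra|]. rewrite IHn, S_INR; lra. Qed.

Lemma sumR_zero n f : (forall i, (i < n)%nat -> f i = 0) -> sumR n f = 0.
Proof. intros H. rewrite (sumR_ext _ _ (fun _ => 0)) by auto. rewrite sumR_const; ring. Qed.

Lemma sumR_split a b f : sumR (a + b) f = sumR a f + sumR b (fun i => f (a + i)%nat).
Proof.
  induction b as [|b IH]; cbn [sumR]; [rewrite Nat.add_0_r; lra|].
  rewrite Nat.add_succ_r; cbn [sumR]. rewrite IH; lra.
Qed.

Lemma sumR_shift n f : sumR (S n) f = f O + sumR n (fun i => f (S i)).
Proof. induction n; cbn [sumR] in *; [lra|]. rewrite IHn. lra. Qed.

Lemma sumR_double n f :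
  sumR (2 * n) f = sumR n (fun i => f (2 * i)%nat + f (2 * i + 1)%nat).
Proof.
  induction n as [|n IH]; [simpl; lra|].
  replace (2 * S n)%nat with (S (S (2 * n))) by lia. cbn [sumR]. rewrite IH.
  replace (2 * n + 1)%nat with (S (2 * n)) by lia. lra.
Qed.

Lemma sumR_blocks m B g : (m <> 0)%nat ->
  sumR (B * m) (fun p => g (p / m)%nat) = INR m * sumR B g.
Proof.
  intros Hm. induction B as [|B IH]; [simpl; ring|].
  rewrite Nat.mul_succ_l, sumR_split, IH.
  rewrite (sumR_ext m _ (fun _ => g B)), sumR_const; [cbn [sumR]; ring|].
  intros i Hi. rewrite Nat.div_add_l, Nat.div_small by lia. f_equal; lia.
Qed.

Definition lsum {A} (l : list A) (f : A -> R) : R :=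
  fold_right (fun x acc => f x + acc) 0 l.

Lemma lsum_app {A} (l1 l2 : list A) f : lsum (l1 ++ l2) f = lsum l1 f + lsum l2 f.
Proof. induction l1; simpl; [lra|]. unfold lsum in *; simpl. rewrite IHl1; lra. Qed.

Lemma lsum_ext {A} (l : list A) f g : (forall x, f x = g x) -> lsum l f = lsum l g.
Proof. intros H; induction l; simpl; [reflexivity|]. unfold lsum in *; simpl. rewrite IHl, H; reflexivity. Qed.

Lemma lsum_plus {A} (l : list A) f g : lsum l (fun x => f x + g x) = lsum l f + lsum l g.
Proof. induction l; simpl; [lra|]. unfold lsum in *; simpl. rewrite IHl; lra. Qed.

Lemma lsum_scal {A} (l : list A) c f : lsum l (fun x => c * f x) = c * lsum l f.
Proof. induction l; simpl; [lra|]. unfold lsum in *; simpl. rewrite IHl; lra. Qed.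

Lemma lsum_const {A} (l : list A) c : lsum l (fun _ => c) = INR (length l) * c.
Proof.
  induction l; [simpl; lra|]. cbn [length]. rewrite S_INR.
  unfold lsum in *; simpl. rewrite IHl; lra.
Qed.

Lemma lsum_le_in {A} (l : list A) f g :
  (forall x, In x l -> f x <= g x) -> lsum l f <= lsum l g.
Proof.
  induction l as [|a l IH]; intros H; simpl; [lra|]. unfold lsum in *; simpl.
  assert (f a <= g a) by (apply H; left; auto).
  assert (fold_right (fun x acc => f x + acc) 0 l <= fold_right (fun x acc => g x + acc) 0 l)
    by (apply IH; intros; apply H; right; auto).
  lra.
Qed.

Lemma lsum_seq m f : lsum (seq 0 m) f = sumR m f.
Proof. induction m; [reflexivity|]. rewrite seq_S, lsum_app, IHm. cbn [sumR]. unfold lsum; simpl. lra. Qed.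

Lemma lsum_flat_map {A B} (g : A -> list B) l f :
  lsum (flat_map g l) f = lsum l (fun x => lsum (g x) f).
Proof. induction l; simpl; [reflexivity|]. rewrite lsum_app, IHl. reflexivity. Qed.

Lemma lsum_map {A B} (g : A -> B) l f : lsum (map g l) f = lsum l (fun x => f (g x)).
Proof. induction l; simpl; [reflexivity|]. unfold lsum in *; simpl. rewrite IHl. reflexivity. Qed.

Lemma lsum_list_prod {A B} (l1 : list A) (l2 : list B) f :
  lsum (list_prod l1 l2) f = lsum l1 (fun x => lsum l2 (fun y => f (x, y))).
Proof.
  induction l1; simpl; [reflexivity|].
  rewrite lsum_app, IHl1, lsum_map. reflexivity.
Qed.

Lemma lsum_list_prod_mul {A B} (l1 : list A) (l2 : list B) f g :
  lsum (list_prod l1 l2) (fun p => f (fst p) * g (snd p)) = lsum l1 f * lsum l2 g.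
Proof.
  rewrite lsum_list_prod, Rmult_comm, <- lsum_scal. apply lsum_ext. intros x.
  rewrite Rmult_comm, <- lsum_scal. reflexivity.
Qed.

Lemma lsum_sumR_swap {A} (l : list A) n f :
  lsum l (fun x => sumR n (f x)) = sumR n (fun i => lsum l (fun x => f x i)).
Proof.
  induction n as [|n IH]; cbn [sumR].
  - rewrite lsum_const. ring.
  - rewrite lsum_plus, IH. reflexivity.
Qed.

Lemma lsum_list_prod_fst {A B} (l1 : list A) (l2 : list B) f :
  lsum (list_prod l1 l2) (fun p => f (fst p)) = INR (length l2) * lsum l1 f.
Proof.
  rewrite lsum_list_prod, <- lsum_scal. apply lsum_ext. intros x. simpl. apply lsum_const.
Qed.

Lemma lsum_list_prod_snd {A B} (l1 : list A) (l2 : list B) g :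
  lsum (list_prod l1 l2) (fun p => g (snd p)) = INR (length l1) * lsum l2 g.
Proof.
  rewrite lsum_list_prod, (lsum_ext _ _ (fun _ => lsum l2 g)), lsum_const by reflexivity. ring.
Qed.

Definition bools : list bool := [true; false].

Lemma lsum_bools f : lsum bools f = f true + f false.
Proof. unfold lsum; simpl; lra. Qed.

Lemma wsum_lsum F f : wsum F f = lsum F (fun p => fst p * f (snd p)).
Proof. reflexivity. Qed.

Lemma wsum_ext F f g : (forall h, f h = g h) -> wsum F f = wsum F g.
Proof. intros H. rewrite !wsum_lsum. apply lsum_ext. intros; rewrite H; reflexivity. Qed.

Lemma wsum_plus F f g : wsum F (fun h => f h + g h) = wsum F f + wsum F g.
Proof. rewrite !wsum_lsum, <- lsum_plus. apply lsum_ext. intros; lra. Qed.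

Lemma wsum_scal F c f : wsum F (fun h => c * f h) = c * wsum F f.
Proof. rewrite !wsum_lsum, <- lsum_scal. apply lsum_ext. intros; lra. Qed.

Lemma wsum_const F c : wsum F (fun _ => c) = c * wsum F (fun _ => 1).
Proof. rewrite <- wsum_scal. apply wsum_ext; intros; lra. Qed.

Lemma wsum_le F f g : Forall (fun p => 0 <= fst p) F ->
  (forall h, f h <= g h) -> wsum F f <= wsum F g.
Proof.
  intros HF H. rewrite !wsum_lsum. apply lsum_le_in. intros p Hp.
  apply Rmult_le_compat_l; [|apply H]. rewrite Forall_forall in HF. auto.
Qed.

Lemma wsum_flat_map {A} (g : A -> sign_family) l f :
  wsum (flat_map g l) f = lsum l (fun x => wsum (g x) f).
Proof. apply lsum_flat_map. Qed.

Definition scale (c : R) (F : sign_family) : sign_family :=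
  map (fun p => (c * fst p, snd p)) F.

Lemma wsum_scale c F f : wsum (scale c F) f = c * wsum F f.
Proof. unfold scale. rewrite !wsum_lsum, lsum_map, <- lsum_scal. apply lsum_ext. intros; simpl; lra. Qed.

Lemma scale_nonneg c F : 0 <= c -> Forall (fun p => 0 <= fst p) F ->
  Forall (fun p => 0 <= fst p) (scale c F).
Proof.
  intros Hc HF. apply Forall_forall. intros p Hp. apply in_map_iff in Hp as [q [<- Hq]].
  rewrite Forall_forall in HF. simpl. apply Rmult_le_pos; auto.
Qed.

(** * Mixtures of product measures *)

Definition set_at (h : nat -> bool) (t : nat) (v : bool) : nat -> bool :=
  fun i => if Nat.eqb i t then v else h i.

Lemma set_at_same h t v : set_at h t v t = v.
Proof. unfold set_at. rewrite Nat.eqb_refl; reflexivity. Qed.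

Lemma set_at_other h t v i : i <> t -> set_at h t v i = h i.
Proof. intros H; unfold set_at. destruct (Nat.eqb_spec i t); congruence. Qed.

Fixpoint product_family (mu : nat -> R) (t : nat) : sign_family :=
  match t with
  | O => [(1, fun _ => true)]
  | S t' => flat_map (fun p => [(fst p * ((1 + mu t) / 2), set_at (snd p) t true);
                               (fst p * ((1 - mu t) / 2), set_at (snd p) t false)])
                     (product_family mu t')
  end.

Lemma wsum_product_family_S mu t f : wsum (product_family mu (S t)) f =
  wsum (product_family mu t) (fun h => (1 + mu (S t)) / 2 * f (set_at h (S t) true)
                                     + (1 - mu (S t)) / 2 * f (set_at h (S t) false)).
Proof.
  cbn [product_family]. rewrite wsum_flat_map, wsum_lsum. apply lsum_ext. intros [w h].
  unfold wsum; simpl. lra.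
Qed.

Lemma product_family_nonneg mu t : (forall i, Rabs (mu i) <= 1) ->
  Forall (fun p => 0 <= fst p) (product_family mu t).
Proof.
  intros Hmu. induction t as [|t IH]; simpl; [constructor; [simpl; lra | constructor]|].
  apply Forall_forall. intros x Hx. apply in_flat_map in Hx as [p [Hp Hx]].
  rewrite Forall_forall in IH. specialize (IH p Hp).
  pose proof (Hmu (S t)). pose proof (Rle_abs (mu (S t))).
  pose proof (Rle_abs (- mu (S t))). rewrite Rabs_Ropp in *.
  destruct Hx as [<-|[<-|[]]]; simpl; apply Rmult_le_pos; lra.
Qed.

Lemma product_family_mass mu t : wsum (product_family mu t) (fun _ => 1) = 1.
Proof.
  induction t as [|t IH]; [unfold wsum; simpl; lra|].
  rewrite wsum_product_family_S, (wsum_ext _ _ (fun _ => 1)); [exact IH|]. intros; lra.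
Qed.

Lemma product_family_mean mu t i : (1 <= i <= t)%nat ->
  wsum (product_family mu t) (fun h => sgn (h i)) = mu i.
Proof.
  induction t as [|t IH]; intros Hi; [lia|]. rewrite wsum_product_family_S.
  destruct (Nat.eq_dec i (S t)) as [->|Hne].
  - rewrite (wsum_ext _ _ (fun _ => mu (S t))), wsum_const, product_family_mass; [lra|].
    intros h. rewrite !set_at_same. simpl. lra.
  - rewrite <- IH by lia. apply wsum_ext. intros h. rewrite !set_at_other by auto. lra.
Qed.

Lemma product_family_cov mu t i j : (1 <= i <= t)%nat -> (1 <= j <= t)%nat -> i <> j ->
  wsum (product_family mu t) (fun h => sgn (h i) * sgn (h j)) = mu i * mu j.
Proof.
  induction t as [|t IH]; intros Hi Hj Hij; [lia|]. rewrite wsum_product_family_S.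
  destruct (Nat.eq_dec i (S t)) as [->|Hi'].
  - rewrite (wsum_ext _ _ (fun h => mu (S t) * sgn (h j))).
    + rewrite wsum_scal, product_family_mean by lia. reflexivity.
    + intros h. rewrite !set_at_same, !set_at_other by auto. simpl. lra.
  - destruct (Nat.eq_dec j (S t)) as [->|Hj'].
    + rewrite (wsum_ext _ _ (fun h => mu (S t) * sgn (h i))).
      * rewrite wsum_scal, product_family_mean by lia. lra.
      * intros h. rewrite !set_at_same, !set_at_other by auto. simpl. lra.
    + rewrite <- IH by lia. apply wsum_ext. intros h. rewrite !set_at_other by auto. lra.
Qed.

Lemma product_family_psum mu n t : (t <= n)%nat ->
  wsum (product_family mu n) (fun h => psum h t) = sumR t (fun i => mu (S i)).
Proof.
  induction t as [|t IH]; intros Ht.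
  - simpl. rewrite wsum_const, product_family_mass. lra.
  - cbn [psum sumR]. rewrite wsum_plus, IH, product_family_mean by lia. reflexivity.
Qed.

Lemma maxps_ge_abs_psum h n t : (1 <= t <= n)%nat -> Rabs (psum h t) <= maxps h n.
Proof.
  induction n as [|n IH]; intros Ht; [lia|]. cbn [maxps].
  destruct (Nat.eq_dec t (S n)) as [->|Hne]; [apply Rmax_r|].
  eapply Rle_trans; [apply IH; lia | apply Rmax_l].
Qed.

Lemma maxps_nonneg h n : 0 <= maxps h n.
Proof. induction n; cbn [maxps]; [lra|]. eapply Rle_trans; [apply IHn | apply Rmax_l]. Qed.

Lemma maxps_ge_psum h n t : (t <= n)%nat -> psum h t <= maxps h n.
Proof.
  intros Ht. destruct t as [|t]; [apply maxps_nonneg|].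
  eapply Rle_trans; [apply Rle_abs | apply maxps_ge_abs_psum; lia].
Qed.

Lemma one_le_maxps h n : (1 <= n)%nat -> 1 <= maxps h n.
Proof.
  intros Hn. eapply Rle_trans; [|apply (maxps_ge_abs_psum h n 1); lia].
  simpl. unfold sgn. destruct (h 1%nat); rewrite Rplus_0_l;
    [rewrite Rabs_R1 | rewrite Rabs_left by lra]; lra.
Qed.

Lemma indicator_sign_pair (x y a b : bool) :
  (if andb (Bool.eqb x a) (Bool.eqb y b) then 1 else 0) =
  / 4 * (1 + sgn a * sgn x + sgn b * sgn y + sgn a * sgn b * (sgn x * sgn y)).
Proof. unfold sgn. destruct x, y, a, b; simpl; lra. Qed.

Section Mixture.

Variables (P : Type) (ps : list P) (mu : P -> nat -> R).
Hypothesis mu_bounded : forall p i, Rabs (mu p i) <= 1.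
Hypothesis ps_nonempty : ps <> [].

Definition mixture (t : nat) : sign_family :=
  scale (/ INR (length ps)) (flat_map (fun p => product_family (mu p) t) ps).

Lemma length_ps_pos : 0 < INR (length ps).
Proof. destruct ps; [congruence|]. cbn [length]. rewrite S_INR. pose proof (pos_INR (length l)); lra. Qed.

Lemma wsum_mixture t f : wsum (mixture t) f =
  / INR (length ps) * lsum ps (fun p => wsum (product_family (mu p) t) f).
Proof. unfold mixture. rewrite wsum_scale, wsum_flat_map. reflexivity. Qed.

Lemma mixture_distribution t : is_distribution (mixture t).
Proof.
  pose proof length_ps_pos. split.
  - apply scale_nonneg; [left; apply Rinv_0_lt_compat; auto|].
    apply Forall_forall. intros x Hx. apply in_flat_map in Hx as [p [_ Hx]].
    pose proof (product_family_nonneg (mu p) t (mu_bounded p)) as Hp.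
    rewrite Forall_forall in Hp. auto.
  - rewrite wsum_mixture, (lsum_ext _ _ (fun _ => 1)), lsum_const.
    + field. lra.
    + intros p. apply product_family_mass.
Qed.

Lemma mixture_two_wise_indep n :
  (forall i, (1 <= i <= n)%nat -> lsum ps (fun p => mu p i) = 0) ->
  (forall i j, (1 <= i <= n)%nat -> (1 <= j <= n)%nat -> i <> j ->
     lsum ps (fun p => mu p i * mu p j) = 0) ->
  two_wise_indep n (mixture n).
Proof.
  intros Hmean Hcov i j Hi Hj Hij a b. pose proof length_ps_pos.
  rewrite wsum_mixture.
  rewrite (lsum_ext _ _ (fun p => / 4 * (1 + sgn a * mu p i + sgn b * mu p j
                                         + sgn a * sgn b * (mu p i * mu p j)))).
  - rewrite lsum_scal, !lsum_plus, !lsum_scal, lsum_const, Hmean, Hmean, Hcov by auto.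
    field. lra.
  - intros p. rewrite (wsum_ext _ _ _ (fun h => indicator_sign_pair (h i) (h j) a b)).
    rewrite wsum_scal, !wsum_plus, !wsum_scal, product_family_mass,
      !product_family_mean, product_family_cov by auto.
    reflexivity.
Qed.

Lemma mixture_maxps_ge_one n : (1 <= n)%nat ->
  1 <= wsum (mixture n) (fun h => maxps h n).
Proof.
  intros Hn. destruct (mixture_distribution n) as [Hnn Hmass].
  rewrite <- Hmass. apply wsum_le; auto. intros h. apply one_le_maxps; auto.
Qed.

Lemma mixture_maxps_ge_psum n (t : P -> nat) : (forall p, In p ps -> (t p <= n)%nat) ->
  / INR (length ps) * lsum ps (fun p => sumR (t p) (fun i => mu p (S i)))
  <= wsum (mixture n) (fun h => maxps h n).
Proof.
  intros Ht. pose proof length_ps_pos. rewrite wsum_mixture.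
  apply Rmult_le_compat_l; [left; apply Rinv_0_lt_compat; auto|].
  apply lsum_le_in. intros p Hp. rewrite <- (product_family_psum (mu p) n) by auto.
  apply wsum_le; [apply product_family_nonneg, mu_bounded|].
  intros h. apply maxps_ge_psum; auto.
Qed.

End Mixture.

Arguments mixture {P} ps mu t.

(** * Walsh characters *)

Definition delta (a b : nat) : R := if Nat.eqb a b then 1 else 0.

Lemma pow2_pos k : (0 < 2 ^ k)%nat.
Proof. apply Nat.neq_0_lt_0, Nat.pow_nonzero; lia. Qed.

Lemma INR_pow2_ge1 k : 1 <= INR (2 ^ k).
Proof. pose proof (pow2_pos k). apply (le_INR 1). lia. Qed.

Lemma pow2_S j : (2 ^ S j = 2 ^ j + 2 ^ j)%nat.
Proof. rewrite Nat.pow_succ_r'. lia. Qed.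

Lemma INR_pow2_S j : INR (2 ^ S j) = 2 * INR (2 ^ j).
Proof. rewrite pow2_S, plus_INR; ring. Qed.

Lemma pow4 k : (4 ^ k = 2 ^ k * 2 ^ k)%nat.
Proof. rewrite <- Nat.pow_mul_l. reflexivity. Qed.

Lemma sumR_halves k g : sumR (2 ^ S k) g = sumR (2 ^ k) (fun B => g B + g (2 ^ k + B)%nat).
Proof. rewrite pow2_S, sumR_split, sumR_plus. reflexivity. Qed.

(* The Walsh characters [(-1)^<a, b>] of [(Z/2)^k], [a] and [b] read as bit vectors. *)
Fixpoint walsh (k a b : nat) : R :=
  match k with
  | O => 1
  | S k' => walsh k' (a / 2) (b / 2) * (if andb (Nat.odd a) (Nat.odd b) then -1 else 1)
  end.

Lemma walsh_abs k a b : Rabs (walsh k a b) = 1.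
Proof.
  revert a b; induction k as [|k IH]; intros a b; cbn [walsh]; [apply Rabs_R1|].
  rewrite Rabs_mult, IH. destruct (Nat.odd a && Nat.odd b)%bool;
    [rewrite Rabs_left by lra | rewrite Rabs_R1]; lra.
Qed.

Lemma walsh_0_l k b : walsh k 0 b = 1.
Proof. revert b; induction k; intros; cbn [walsh]; [lra|]. rewrite Nat.Div0.div_0_l, IHk. simpl. lra. Qed.

Lemma div2_double q : ((2 * q) / 2 = q)%nat.
Proof. rewrite Nat.mul_comm, Nat.div_mul; auto. Qed.

Lemma div2_double_1 q : ((2 * q + 1) / 2 = q)%nat.
Proof. replace (2 * q + 1)%nat with (1 + q * 2)%nat by lia. rewrite Nat.div_add by lia. reflexivity. Qed.

Lemma walsh_orth k b b' : (b < 2 ^ k)%nat -> (b' < 2 ^ k)%nat ->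
  sumR (2 ^ k) (fun a => walsh k a b * walsh k a b') = INR (2 ^ k) * delta b b'.
Proof.
  revert b b'; induction k as [|k IH]; intros b b' Hb Hb'.
  - simpl in Hb, Hb'. replace b with 0%nat by lia. replace b' with 0%nat by lia.
    unfold delta; simpl. ring.
  - rewrite Nat.pow_succ_r' in *. rewrite sumR_double.
    set (s c := if Nat.odd c then -1 else 1).
    rewrite (sumR_ext _ _ (fun a => (1 + s b * s b') * (walsh k a (b / 2) * walsh k a (b' / 2)))).
    2:{ intros a _. cbn [walsh]. rewrite div2_double, div2_double_1, Nat.odd_even, Nat.odd_odd.
        unfold s. destruct (Nat.odd b), (Nat.odd b'); simpl; ring. }
    rewrite sumR_scal, mult_INR. unfold s, delta. simpl INR.
    destruct (Nat.Even_or_Odd b) as [[q Hq]|[q Hq]];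
      destruct (Nat.Even_or_Odd b') as [[q' Hq']|[q' Hq']]; subst b b';
      rewrite ?div2_double, ?div2_double_1, ?Nat.odd_even, ?Nat.odd_odd, IH by lia;
      unfold delta;
      repeat match goal with |- context [Nat.eqb ?x ?y] => destruct (Nat.eqb_spec x y) end;
      try lia; lra.
Qed.

Lemma walsh_orth_nonzero k l l' : (l < 2 ^ k)%nat -> (l' < 2 ^ k)%nat ->
  sumR (2 ^ k) (fun a => (if Nat.eqb a 0 then 0 else 1) * (walsh k a l * walsh k a l'))
  = INR (2 ^ k) * delta l l' - 1.
Proof.
  intros Hl Hl'. rewrite <- walsh_orth by auto. pose proof (pow2_pos k).
  destruct (2 ^ k)%nat eqn:E; [lia|]. rewrite !sumR_shift, !walsh_0_l. simpl.
  rewrite (sumR_ext _ _ (fun i => walsh k (S i) l * walsh k (S i) l')) by (intros; simpl; ring).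
  ring.
Qed.

(** * The Haar-type drift *)

Definition halfsign (j b : nat) : R := if Nat.ltb b (2 ^ j) then 1 else -1.

Lemma halfsign_lo j b : (b < 2 ^ j)%nat -> halfsign j b = 1.
Proof. intros H; unfold halfsign. rewrite (proj2 (Nat.ltb_lt _ _) H). reflexivity. Qed.

Lemma halfsign_hi j b : halfsign j (2 ^ j + b) = -1.
Proof. unfold halfsign. rewrite (proj2 (Nat.ltb_ge _ _)) by lia. reflexivity. Qed.

Lemma halfsign_cases j b : halfsign j b = 1 \/ halfsign j b = -1.
Proof. unfold halfsign; destruct (Nat.ltb _ _); auto. Qed.

Lemma halfsign_abs j b : Rabs (halfsign j b) = 1.
Proof. destruct (halfsign_cases j b) as [-> | ->]; [apply Rabs_R1 | rewrite Rabs_left; lra]. Qed.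

Lemma sgn_abs s : Rabs (sgn s) = 1.
Proof. destruct s; simpl; [apply Rabs_R1 | rewrite Rabs_left; lra]. Qed.

Lemma mod_add_hi h B : (B < h)%nat -> ((h + B) mod h = B)%nat.
Proof.
  intros H. replace (h + B)%nat with (B + 1 * h)%nat by lia.
  rewrite Nat.Div0.mod_add. apply Nat.mod_small; auto.
Qed.

(* [drift k B r] is a Haar-type vector on the blocks [b < 2^k]: for every dyadic
   interval I of length [2^(j+1)] containing [B] it adds [2^(k-1-j) * drift_sign j B r]
   times [+1] on the lower and [-1] on the upper half of I. The sign is random
   (it is [r]) at the finest scale; at every other scale it is read off the
   position of [B] so that the scale pushes the prefix sum up to [B] upward. *)
Definition drift_sign (k' B : nat) (r : bool) : R :=
  match k' with
  | O => sgn r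
  | S j => if Bool.eqb (Nat.ltb B (2 ^ S j)) (Nat.ltb (B mod 2 ^ S j) (2 ^ j)) then -1 else 1
  end.

Fixpoint drift (k B : nat) (r : bool) (b : nat) : R :=
  match k with
  | O => 0
  | S k' => drift_sign k' B r * halfsign k' b
           + (if Bool.eqb (Nat.ltb B (2 ^ k')) (Nat.ltb b (2 ^ k'))
              then 2 * drift k' (B mod 2 ^ k') r (b mod 2 ^ k') else 0)
  end.

Lemma drift_sign_lo j B r : (B < 2 ^ S j)%nat -> drift_sign (S j) B r = - halfsign j B.
Proof.
  intros H. unfold drift_sign, halfsign.
  rewrite (proj2 (Nat.ltb_lt _ _) H), Nat.mod_small by auto.
  destruct (Nat.ltb B (2 ^ j)); simpl; ring.
Qed.

Lemma drift_sign_hi j B r : (B < 2 ^ S j)%nat ->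
  drift_sign (S j) (2 ^ S j + B) r = halfsign j B.
Proof.
  intros H. unfold drift_sign, halfsign.
  rewrite (proj2 (Nat.ltb_ge _ _)), mod_add_hi by lia.
  destruct (Nat.ltb B (2 ^ j)); simpl; ring.
Qed.

Lemma drift_sign_abs k' B r : Rabs (drift_sign k' B r) = 1.
Proof.
  destruct k'; [apply sgn_abs|]. simpl.
  destruct (Bool.eqb _ _); [rewrite Rabs_left; lra | apply Rabs_R1].
Qed.

Lemma drift_lo k' B r b : (B < 2 ^ k')%nat -> drift (S k') B r b =
  drift_sign k' B r * halfsign k' b
  + (if Nat.ltb b (2 ^ k') then 2 * drift k' B r (b mod 2 ^ k') else 0).
Proof.
  intros H. cbn [drift]. rewrite (proj2 (Nat.ltb_lt _ _) H), Nat.mod_small by auto.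
  destruct (Nat.ltb b _); reflexivity.
Qed.

Lemma drift_hi k' B r b : (B < 2 ^ k')%nat -> drift (S k') (2 ^ k' + B) r b =
  drift_sign k' (2 ^ k' + B) r * halfsign k' b
  + (if Nat.ltb b (2 ^ k') then 0 else 2 * drift k' B r (b mod 2 ^ k')).
Proof.
  intros H. cbn [drift]. rewrite (proj2 (Nat.ltb_ge _ _)), mod_add_hi by lia.
  destruct (Nat.ltb b _); reflexivity.
Qed.

Lemma drift_bound k B r b : Rabs (drift k B r b) <= INR (2 ^ k) - 1.
Proof.
  revert B b; induction k as [|k' IH]; intros B b; [simpl; rewrite Rabs_R0; lra|].
  cbn [drift]. rewrite INR_pow2_S. pose proof (INR_pow2_ge1 k').
  eapply Rle_trans; [apply Rabs_triang|].
  rewrite Rabs_mult, drift_sign_abs, halfsign_abs.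
  destruct (Bool.eqb _ _); [|rewrite Rabs_R0; lra].
  rewrite Rabs_mult, Rabs_right by lra.
  specialize (IH (B mod 2 ^ k')%nat (b mod 2 ^ k')%nat). lra.
Qed.

Lemma drift_mean k b : sumR (2 ^ k) (fun B => drift k B true b + drift k B false b) = 0.
Proof.
  revert b; induction k as [|k' IH]; intros b; [apply sumR_zero; intros; simpl; ring|].
  rewrite sumR_halves.
  rewrite (sumR_ext _ _ (fun B => 2 * (drift k' B true (b mod 2 ^ k')
                                       + drift k' B false (b mod 2 ^ k')))).
  - rewrite sumR_scal, IH. ring.
  - intros B HB. rewrite !drift_lo, !drift_hi by auto. destruct k' as [|j].
    + simpl drift_sign. destruct (Nat.ltb b _); simpl; ring.
    + rewrite !drift_sign_lo, !drift_sign_hi by auto. destruct (Nat.ltb b _); ring.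
Qed.

Lemma halfsign_sum j : sumR (2 ^ S j) (halfsign j) = 0.
Proof. rewrite sumR_halves. apply sumR_zero. intros B HB. rewrite halfsign_lo, halfsign_hi by auto. ring. Qed.

Lemma halfsign_drift_mean j c :
  sumR (2 ^ S j) (fun B => halfsign j B * (drift (S j) B true c + drift (S j) B false c)) = 0.
Proof.
  rewrite sumR_halves. destruct j as [|i].
  - apply sumR_zero. intros B HB. rewrite halfsign_lo, halfsign_hi by auto.
    rewrite !drift_lo, !drift_hi by auto. simpl. destruct (Nat.ltb c _); ring.
  - rewrite (sumR_ext _ _ (fun B => (-4 * halfsign (S i) c) * halfsign i B
        + (if Nat.ltb c (2 ^ S i) then 2 else -2)
          * (drift (S i) B true (c mod 2 ^ S i) + drift (S i) B false (c mod 2 ^ S i)))).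
    + rewrite sumR_plus, !sumR_scal, halfsign_sum, drift_mean. ring.
    + intros B HB. rewrite halfsign_lo, halfsign_hi by auto.
      rewrite !(drift_lo (S i) B), !(drift_hi (S i) B), !drift_sign_lo, !drift_sign_hi by auto.
      destruct (Nat.ltb c _); ring.
Qed.

Lemma drift_halves_prod j B r b b' : (B < 2 ^ S j)%nat ->
  let D x := drift (S j) B r (x mod 2 ^ S j) in
  drift (S (S j)) B r b * drift (S (S j)) B r b'
  + drift (S (S j)) (2 ^ S j + B) r b * drift (S (S j)) (2 ^ S j + B) r b'
  = 2 * halfsign (S j) b * halfsign (S j) b' * (1 - halfsign j B * (D b + D b'))
    + (if Bool.eqb (Nat.ltb b (2 ^ S j)) (Nat.ltb b' (2 ^ S j)) then 4 * D b * D b' else 0).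
Proof.
  intros HB D. unfold D.
  rewrite !(drift_lo (S j) B), !(drift_hi (S j) B), drift_sign_lo, drift_sign_hi by auto.
  unfold halfsign. destruct (Nat.ltb B _), (Nat.ltb b _), (Nat.ltb b' _); simpl; ring.
Qed.

Lemma delta_mod_same_half h b b' : (b < h + h)%nat -> (b' < h + h)%nat ->
  ((b < h)%nat <-> (b' < h)%nat) -> delta (b mod h) (b' mod h) = delta b b'.
Proof.
  intros Hb Hb' Hhalf. unfold delta.
  destruct (Nat.eqb_spec (b mod h) (b' mod h)) as [Hmod|Hmod], (Nat.eqb_spec b b'); subst;
    try reflexivity; [exfalso | congruence].
  destruct (Nat.lt_ge_cases b h), (Nat.lt_ge_cases b' h); try lia.
  - rewrite !Nat.mod_small in Hmod; auto.
  - replace b with (b - h + 1 * h)%nat in Hmod by lia.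
    replace b' with (b' - h + 1 * h)%nat in Hmod by lia.
    rewrite !Nat.Div0.mod_add, !Nat.mod_small in Hmod by lia. lia.
Qed.


Lemma drift_cov k b b' : (b < 2 ^ k)%nat -> (b' < 2 ^ k)%nat ->
  sumR (2 ^ k) (fun B => drift k B true b * drift k B true b' + drift k B false b * drift k B false b')
  = 2 * INR (2 ^ k) * (INR (2 ^ k) * delta b b' - 1).
Proof.
  revert b b'; induction k as [|[|j] IH]; intros b b' Hb Hb'.
  - simpl in Hb, Hb'. replace b with 0%nat by lia. replace b' with 0%nat by lia.
    unfold delta; simpl. ring.
  - simpl in Hb, Hb'.
    assert (b = 0 \/ b = 1)%nat as [-> | ->] by lia; assert (b' = 0 \/ b' = 1)%nat as [-> | ->] by lia;
      simpl; unfold delta, halfsign; simpl; ring.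
  - rewrite pow2_S in Hb, Hb'. rewrite sumR_halves.
    set (H := (2 ^ S j)%nat) in *.
    set (same := Bool.eqb (Nat.ltb b H) (Nat.ltb b' H)).
    set (ss := halfsign (S j) b * halfsign (S j) b').
    set (Dt x B := drift (S j) B true (x mod H)).
    set (Df x B := drift (S j) B false (x mod H)).
    rewrite (sumR_ext _ _ (fun B => 4 * ss
        + (-2 * ss) * (halfsign j B * (Dt b B + Df b B))
        + (-2 * ss) * (halfsign j B * (Dt b' B + Df b' B))
        + (if same then 4 else 0) * (Dt b B * Dt b' B + Df b B * Df b' B))).
    2:{ intros B HB.
        transitivity ((drift (S (S j)) B true b * drift (S (S j)) B true b'
                      + drift (S (S j)) (H + B) true b * drift (S (S j)) (H + B) true b')
                     + (drift (S (S j)) B false b * drift (S (S j)) B false b'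
                      + drift (S (S j)) (H + B) false b * drift (S (S j)) (H + B) false b')); [ring|].
        unfold H. rewrite !drift_halves_prod by auto. fold H same ss.
        destruct same; unfold ss, Dt, Df; ring. }
    assert (Hmod : forall x, (x < H + H)%nat -> (x mod H < H)%nat)
      by (intros; apply Nat.mod_upper_bound; lia).
    rewrite !sumR_plus, !sumR_scal, sumR_const. unfold Dt, Df, H.
    rewrite !halfsign_drift_mean, IH by auto. fold H.
    replace (INR (2 ^ S (S j))) with (2 * INR H) by (unfold H; symmetry; apply INR_pow2_S).
    unfold same, ss, halfsign. fold H.
    destruct (Nat.ltb_spec b H), (Nat.ltb_spec b' H); cbn [Bool.eqb];
      try (rewrite delta_mod_same_half by lia; ring).
    all: replace (delta b b') with 0 by (unfold delta; destruct (Nat.eqb_spec b b'); lia || reflexivity); ring.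
Qed.


Definition drift_prefix (k B : nat) (r : bool) : R := sumR B (drift k B r).

Lemma drift_prefix_lo k' B r : (B < 2 ^ k')%nat ->
  drift_prefix (S k') B r = drift_sign k' B r * INR B + 2 * drift_prefix k' B r.
Proof.
  intros H. unfold drift_prefix.
  rewrite (sumR_ext _ _ (fun b => drift_sign k' B r * 1 + 2 * drift k' B r b)).
  - rewrite sumR_plus, sumR_const, sumR_scal. ring.
  - intros b Hb. rewrite drift_lo, halfsign_lo, (proj2 (Nat.ltb_lt _ _)), Nat.mod_small by lia.
    ring.
Qed.

Lemma drift_prefix_hi k' B r : (B < 2 ^ k')%nat ->
  drift_prefix (S k') (2 ^ k' + B) r
  = drift_sign k' (2 ^ k' + B) r * (INR (2 ^ k') - INR B) + 2 * drift_prefix k' B r.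
Proof.
  intros H. unfold drift_prefix. rewrite sumR_split.
  rewrite (sumR_ext (2 ^ k') _ (fun b => drift_sign k' (2 ^ k' + B) r * 1)).
  - rewrite (sumR_ext B _ (fun i => drift_sign k' (2 ^ k' + B) r * (-1) + 2 * drift k' B r i)).
    + rewrite sumR_plus, !sumR_const, sumR_scal. ring.
    + intros i Hi. rewrite drift_hi, halfsign_hi, (proj2 (Nat.ltb_ge _ _)), mod_add_hi by lia.
      ring.
  - intros b Hb. rewrite drift_hi, halfsign_lo, (proj2 (Nat.ltb_lt _ _)) by lia. ring.
Qed.

Lemma halfsign_tent_sum j :
  sumR (2 ^ S j) (fun B => 2 * halfsign j B * (INR (2 ^ S j) - 2 * INR B))
  = INR (2 ^ S j) * INR (2 ^ S j).
Proof.
  rewrite sumR_halves, (sumR_ext _ _ (fun _ => 2 * INR (2 ^ S j))).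
  - rewrite sumR_const, INR_pow2_S. ring.
  - intros B HB. rewrite halfsign_lo, halfsign_hi, plus_INR, INR_pow2_S by auto. ring.
Qed.

(* Each of the scales [1 .. k'] contributes [4^(k'+1) / 4] to the total; the finest
   scale, whose sign is [r], contributes nothing. *)
Lemma drift_prefix_sum k' :
  sumR (2 ^ S k') (fun B => drift_prefix (S k') B true + drift_prefix (S k') B false)
  = INR (2 ^ S k') * INR (2 ^ S k') * INR k' / 4.
Proof.
  induction k' as [|j IH].
  - rewrite sumR_halves. simpl Nat.pow. cbn [sumR].
    rewrite !(drift_prefix_lo 0 0), !(drift_prefix_hi 0 0) by (simpl; lia).
    unfold drift_prefix. simpl. lra.
  - rewrite sumR_halves.
    rewrite (sumR_ext _ _ (fun B => 2 * halfsign j B * (INR (2 ^ S j) - 2 * INR B)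
                                   + 4 * (drift_prefix (S j) B true + drift_prefix (S j) B false))).
    + rewrite sumR_plus, halfsign_tent_sum, sumR_scal, IH, (INR_pow2_S (S j)), S_INR. field.
    + intros B HB. rewrite !(drift_prefix_lo (S j) B), !(drift_prefix_hi (S j) B),
        !drift_sign_lo, !drift_sign_hi by auto.
      ring.
Qed.

(** * The hard family *)

Definition drift_params (k : nat) : list (nat * bool * bool) :=
  list_prod (list_prod (seq 0 (2 ^ k)) bools) bools.

Definition walsh_params (k : nat) : list (nat * nat * bool) :=
  list_prod (list_prod (seq 0 (2 ^ k)) (seq 0 (2 ^ k))) bools.

Lemma length_drift_params k : INR (length (drift_params k)) = 4 * INR (2 ^ k).
Proof. unfold drift_params. rewrite !length_prod, length_seq, !mult_INR. simpl. ring. Qed.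

Lemma length_walsh_params k : INR (length (walsh_params k)) = 2 * INR (2 ^ k) * INR (2 ^ k).
Proof. unfold walsh_params. rewrite !length_prod, length_seq, !mult_INR. simpl. ring. Qed.

Lemma lsum_drift_params k f : lsum (drift_params k) f =
  sumR (2 ^ k) (fun B => f (B, true, true) + f (B, true, false)
                        + f (B, false, true) + f (B, false, false)).
Proof.
  unfold drift_params. rewrite !lsum_list_prod, lsum_seq. apply sumR_ext. intros B _.
  rewrite !lsum_bools. ring.
Qed.

Lemma lsum_walsh_params k f : lsum (walsh_params k) f =
  sumR (2 ^ k) (fun R => sumR (2 ^ k) (fun A => f (R, A, true) + f (R, A, false))).
Proof.
  unfold walsh_params. rewrite !lsum_list_prod, lsum_seq. apply sumR_ext. intros R _.
  rewrite lsum_seq. apply sumR_ext. intros A _. apply lsum_bools.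
Qed.

(* The random constant [sgn s0] adds the rank-one term missing in drift_cov, so that
   the block means are exactly uncorrelated (block_mean_cov). *)
Definition block_mean (k : nat) (d : nat * bool * bool) (b : nat) : R :=
  let '(B, s0, r) := d in (sgn s0 + drift k B r b) / INR (2 ^ k).

(* Dropping the trivial character [A = 0] leaves correlation [-1/m] between
   distinct offsets of one block (walsh_term_cov). *)
Definition walsh_term (k : nat) (w : nat * nat * bool) (b l : nat) : R :=
  let '(R, A, rho) := w in
  sgn rho * walsh k R b * ((if Nat.eqb A 0 then 0 else 1) * walsh k A l).

Lemma block_mean_bound k d b : Rabs (block_mean k d b) <= 1.
Proof.
  destruct d as [[B s0] r]. unfold block_mean, Rdiv. pose proof (INR_pow2_ge1 k).
  rewrite Rabs_mult, Rabs_inv, (Rabs_right (INR _)) by lra.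
  apply (Rmult_le_reg_r (INR (2 ^ k))); [lra|].
  rewrite Rmult_assoc, Rinv_l, Rmult_1_r by lra.
  eapply Rle_trans; [apply Rabs_triang|].
  pose proof (drift_bound k B r b). rewrite sgn_abs. lra.
Qed.

Lemma walsh_term_bound k w b l : Rabs (walsh_term k w b l) <= 1.
Proof.
  destruct w as [[R A] rho]. unfold walsh_term.
  rewrite !Rabs_mult, sgn_abs, !walsh_abs.
  destruct (Nat.eqb A 0); [rewrite Rabs_R0 | rewrite Rabs_R1]; lra.
Qed.

Lemma block_mean_mean k b : lsum (drift_params k) (fun d => block_mean k d b) = 0.
Proof.
  rewrite lsum_drift_params, <- (Rmult_0_r (2 / INR (2 ^ k))), <- (drift_mean k b), <- sumR_scal.
  pose proof (INR_pow2_ge1 k). apply sumR_ext. intros B _. simpl. field. lra.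
Qed.

Lemma block_mean_cov k b b' : (b < 2 ^ k)%nat -> (b' < 2 ^ k)%nat ->
  lsum (drift_params k) (fun d => block_mean k d b * block_mean k d b') = 4 * delta b b'.
Proof.
  intros Hb Hb'. pose proof (INR_pow2_ge1 k).
  rewrite lsum_drift_params.
  rewrite (sumR_ext _ _ (fun B => 4 / INR (2 ^ k) / INR (2 ^ k)
      + 2 / INR (2 ^ k) / INR (2 ^ k)
        * (drift k B true b * drift k B true b' + drift k B false b * drift k B false b'))).
  - rewrite sumR_plus, sumR_scal, sumR_const, drift_cov by auto. field. lra.
  - intros B _. simpl. field. lra.
Qed.

Lemma walsh_term_mean k b l : lsum (walsh_params k) (fun w => walsh_term k w b l) = 0.
Proof.
  rewrite lsum_walsh_params. apply sumR_zero. intros R _. apply sumR_zero. intros A _.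
  simpl. ring.
Qed.

Lemma walsh_term_cov k b l b' l' : (b < 2 ^ k)%nat -> (b' < 2 ^ k)%nat ->
  (l < 2 ^ k)%nat -> (l' < 2 ^ k)%nat ->
  lsum (walsh_params k) (fun w => walsh_term k w b l * walsh_term k w b' l')
  = 2 * INR (2 ^ k) * delta b b' * (INR (2 ^ k) * delta l l' - 1).
Proof.
  intros Hb Hb' Hl Hl'. rewrite lsum_walsh_params.
  rewrite (sumR_ext _ _ (fun R => sumR (2 ^ k)
       (fun A => (if Nat.eqb A 0 then 0 else 1) * (walsh k A l * walsh k A l'))
       * (2 * (walsh k R b * walsh k R b')))).
  - rewrite sumR_scal, sumR_scal, walsh_orth, walsh_orth_nonzero by auto. ring.
  - intros R _. rewrite Rmult_comm, <- sumR_scal. apply sumR_ext. intros A _. simpl.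
    destruct (Nat.eqb A 0); ring.
Qed.

Definition hard_params (k : nat) : list ((nat * bool * bool) * (nat * nat * bool)) :=
  list_prod (drift_params k) (walsh_params k).

(* Position [y] of [1 .. 4^k] lies in block [(y-1) / 2^k], at offset [(y-1) mod 2^k]. *)
Definition bias (k : nat) (p : (nat * bool * bool) * (nat * nat * bool)) (y : nat) : R :=
  / 2 * (block_mean k (fst p) ((y - 1) / 2 ^ k)
         + walsh_term k (snd p) ((y - 1) / 2 ^ k) ((y - 1) mod 2 ^ k)).

Lemma bias_bound k p y : Rabs (bias k p y) <= 1.
Proof.
  unfold bias. rewrite Rabs_mult, Rabs_right by lra.
  pose proof (Rabs_triang (block_mean k (fst p) ((y - 1) / 2 ^ k))
                          (walsh_term k (snd p) ((y - 1) / 2 ^ k) ((y - 1) mod 2 ^ k))).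
  pose proof (block_mean_bound k (fst p) ((y - 1) / 2 ^ k)).
  pose proof (walsh_term_bound k (snd p) ((y - 1) / 2 ^ k) ((y - 1) mod 2 ^ k)).
  lra.
Qed.

Lemma bias_mean k y : lsum (hard_params k) (fun p => bias k p y) = 0.
Proof.
  unfold hard_params, bias. rewrite lsum_scal, lsum_plus.
  rewrite (lsum_list_prod_fst _ _ (fun d => block_mean k d ((y - 1) / 2 ^ k))).
  rewrite (lsum_list_prod_snd _ _ (fun w => walsh_term k w ((y - 1) / 2 ^ k) ((y - 1) mod 2 ^ k))).
  rewrite block_mean_mean, walsh_term_mean. ring.
Qed.

Lemma delta_div_mod m x y : (m <> 0)%nat -> x <> y ->
  delta (x / m) (y / m) * delta (x mod m) (y mod m) = 0.
Proof.
  intros Hm Hxy. unfold delta.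
  destruct (Nat.eqb_spec (x / m) (y / m)), (Nat.eqb_spec (x mod m) (y mod m)); try ring.
  exfalso. apply Hxy. rewrite (Nat.div_mod_eq x m), (Nat.div_mod_eq y m). congruence.
Qed.

Lemma bias_cov k x y : (1 <= x <= 4 ^ k)%nat -> (1 <= y <= 4 ^ k)%nat -> x <> y ->
  lsum (hard_params k) (fun p => bias k p x * bias k p y) = 0.
Proof.
  intros Hx Hy Hxy. rewrite pow4 in Hx, Hy. pose proof (pow2_pos k).
  unfold hard_params, bias. set (m := (2 ^ k)%nat) in *.
  assert (Hblk : forall z, (1 <= z <= m * m)%nat -> ((z - 1) / m < m)%nat)
    by (intros; apply Nat.Div0.div_lt_upper_bound; lia).
  assert (Hoff : forall z, ((z - 1) mod m < m)%nat) by (intros; apply Nat.mod_upper_bound; lia).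
  rewrite (lsum_ext _ _ (fun p =>
      / 4 * (block_mean k (fst p) ((x - 1) / m) * block_mean k (fst p) ((y - 1) / m))
    + / 4 * (block_mean k (fst p) ((x - 1) / m) * walsh_term k (snd p) ((y - 1) / m) ((y - 1) mod m))
    + / 4 * (block_mean k (fst p) ((y - 1) / m) * walsh_term k (snd p) ((x - 1) / m) ((x - 1) mod m))
    + / 4 * (walsh_term k (snd p) ((x - 1) / m) ((x - 1) mod m)
             * walsh_term k (snd p) ((y - 1) / m) ((y - 1) mod m)))) by (intros; field).
  rewrite !lsum_plus, !lsum_scal.
  rewrite (lsum_list_prod_fst _ _ (fun d => block_mean k d ((x - 1) / m) * block_mean k d ((y - 1) / m))).
  rewrite (lsum_list_prod_snd _ _ (fun w => walsh_term k w ((x - 1) / m) ((x - 1) mod m)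
                                          * walsh_term k w ((y - 1) / m) ((y - 1) mod m))).
  rewrite (lsum_list_prod_mul _ _ (fun d => block_mean k d ((x - 1) / m))
                                 (fun w => walsh_term k w ((y - 1) / m) ((y - 1) mod m))).
  rewrite (lsum_list_prod_mul _ _ (fun d => block_mean k d ((y - 1) / m))
                                 (fun w => walsh_term k w ((x - 1) / m) ((x - 1) mod m))).
  rewrite !block_mean_mean, block_mean_cov, walsh_term_cov by auto.
  rewrite length_drift_params, length_walsh_params. fold m.
  transitivity (2 * INR m * INR m * INR m
                * (delta ((x - 1) / m) ((y - 1) / m) * delta ((x - 1) mod m) ((y - 1) mod m))).
  - field.
  - rewrite delta_div_mod by lia. ring.
Qed.

Lemma walsh_avg_bias_prefix k B s0 r :
  lsum (walsh_params k) (fun w => sumR (B * 2 ^ k) (fun i => bias k ((B, s0, r), w) (S i)))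
  = INR (2 ^ k) * INR (2 ^ k) * (INR B * sgn s0 + drift_prefix k B r).
Proof.
  pose proof (INR_pow2_ge1 k). pose proof (pow2_pos k).
  rewrite lsum_sumR_swap.
  rewrite (sumR_ext _ _ (fun i => INR (2 ^ k) * INR (2 ^ k) * block_mean k (B, s0, r) (i / 2 ^ k))).
  - rewrite sumR_scal, sumR_blocks by lia. unfold drift_prefix.
    rewrite <- sumR_scal, <- (sumR_const B (sgn s0)), <- sumR_plus. f_equal.
    apply sumR_ext. intros b _. simpl. field. lra.
  - intros i _. unfold bias. simpl fst. simpl snd. replace (S i - 1)%nat with i by lia.
    rewrite lsum_scal, lsum_plus, lsum_const, walsh_term_mean, length_walsh_params. field.
Qed.

Lemma bias_prefix_sum k' : let k := S k' in
  lsum (hard_params k) (fun p => sumR (fst (fst (fst p)) * 2 ^ k) (fun i => bias k p (S i)))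
  = 2 * INR (2 ^ k) * INR (2 ^ k) * (INR (2 ^ k) * INR (2 ^ k) * INR k' / 4).
Proof.
  intros k. unfold hard_params. rewrite lsum_list_prod, lsum_drift_params. simpl fst.
  rewrite (sumR_ext _ _ (fun B => 2 * INR (2 ^ k) * INR (2 ^ k)
                                   * (drift_prefix k B true + drift_prefix k B false))).
  - rewrite sumR_scal. unfold k. rewrite drift_prefix_sum. ring.
  - intros B _. rewrite !walsh_avg_bias_prefix. simpl sgn. ring.
Qed.

Lemma length_hard_params k : INR (length (hard_params k)) = 8 * INR (2 ^ k) * INR (2 ^ k) * INR (2 ^ k).
Proof. unfold hard_params. rewrite length_prod, mult_INR, length_drift_params, length_walsh_params. ring. Qed.

Lemma hard_params_nonempty k : hard_params k <> [].
Proof.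
  intros E. pose proof (length_hard_params k) as H. rewrite E in H.
  pose proof (INR_pow2_ge1 k). simpl in H. nra.
Qed.

Lemma in_hard_params_block k p : In p (hard_params k) -> (fst (fst (fst p)) < 2 ^ k)%nat.
Proof.
  destruct p as [[[B s0] r] w]. unfold hard_params, drift_params.
  rewrite !in_prod_iff, in_seq. simpl. lia.
Qed.

Definition hard_family (k : nat) : sign_family := mixture (hard_params k) (bias k) (4 ^ k).

Lemma hard_family_maxps k :
  INR (2 ^ k) * INR k / 64 <= wsum (hard_family k) (fun h => maxps h (4 ^ k)).
Proof.
  pose proof (INR_pow2_ge1 k).
  assert (Hone : 1 <= wsum (hard_family k) (fun h => maxps h (4 ^ k))).
  { apply mixture_maxps_ge_one; [apply bias_bound | apply hard_params_nonempty |].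
    rewrite pow4. pose proof (pow2_pos k). nia. }
  destruct k as [|k']; [change (INR 0) with 0; lra|].
  assert (Hprefix := mixture_maxps_ge_psum _ _ _ (bias_bound (S k')) (hard_params_nonempty (S k'))
                       (4 ^ S k') (fun p => fst (fst (fst p)) * 2 ^ S k')%nat).
  rewrite bias_prefix_sum, length_hard_params in Hprefix.
  specialize (Hprefix ltac:(intros p Hp; apply in_hard_params_block in Hp; rewrite pow4; nia)).
  fold (hard_family (S k')) in Hprefix.
  set (m := INR (2 ^ S k')) in *. rewrite S_INR.
  replace (/ (8 * m * m * m) * (2 * m * m * (m * m * INR k' / 4))) with (m * INR k' / 16)
    in Hprefix by (field; lra).
  destruct k' as [|k''].
  - assert (m = 2) by (unfold m; simpl; lra). change (INR 0) with 0. lra.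
  - rewrite S_INR in *. pose proof (pos_INR k''). nra.
Qed.

Lemma lg_4pow k : lg (INR (4 ^ k)) = 2 * INR k.
Proof.
  unfold lg. rewrite pow4, mult_INR, pow_INR. replace (INR 2) with 2 by (simpl; lra).
  rewrite ln_mult, ln_pow by (try apply pow_lt; lra).
  assert (0 < ln 2) by (rewrite <- ln_1; apply ln_increasing; lra). field. lra.
Qed.

Lemma sqrt_4pow k : sqrt (INR (4 ^ k)) = INR (2 ^ k).
Proof. rewrite pow4, mult_INR. apply sqrt_square. pose proof (INR_pow2_ge1 k). lra. Qed.

Theorem theorem1 :
  exists c : R, 0 < c /\
    forall k : nat, let n := (4 ^ k)%nat in
      exists F : sign_family,
        is_distribution F /\ two_wise_indep n F /\
        wsum F (fun h => maxps h n) >= c * sqrt (INR n) * lg (INR n).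
Proof.
  exists (/ 128). split; [lra|]. intros k n. exists (hard_family k). split; [|split].
  - apply mixture_distribution; [apply bias_bound | apply hard_params_nonempty].
  - apply mixture_two_wise_indep; [apply hard_params_nonempty | intros; apply bias_mean | apply bias_cov].
  - unfold n. rewrite sqrt_4pow, lg_4pow. pose proof (hard_family_maxps k). lra.
Qed.
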